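(* Let $d$ be a degree sequence with complementary sequence $\overline d$. Then $\Delta_{m(\overline d)}(\overline d)=\Delta_{m(d)}(d)$; that is, the last principal Erdős–Gallai differences of $d$ and $\overline d$ coincide.
   Context: Degree sequences $d=(d_1,\dots,d_n)$ (of finite simple graphs, terms may be $0$) are listed in nonincreasing order; $\overline d=(n-1-d_n,\dots,n-1-d_1)$ is the complementary sequence. $m(d)=\max\{i : d_i\ge i-1\}$. For integers $k\ge 0$, $\Delta_k(d)=k(k-1)+\sum_{i>k}\min\{k,d_i\}-\sum_{i\le k}d_i$. *)

From mathcomp Require Import all_boot all_order all_algebra.
Set Implicit Arguments. Unset Strict Implicit. Unset Printing Implicit Defensive.
Import GRing.Theory Num.Theory.

(* A sequence d = (d_1,...,d_n) is stored as d : seq nat with d_i = nth 0 d (i-1). *)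

Definition is_degree_sequence (d : seq nat) : Prop :=
  sorted geq d /\
  exists e : rel 'I_(size d),
    symmetric e /\ irreflexive e /\
    forall i : 'I_(size d), #|[set j | e i j]| = nth 0 d i.

Definition compl_seq (d : seq nat) : seq nat :=
  [seq (size d).-1 - x | x <- rev d].

(* m(d) = max { i in 1..n : d_i >= i - 1 } (0 if n = 0) *)
Definition mEG (d : seq nat) : nat :=
  \max_(1 <= i < (size d).+1 | i.-1 <= nth 0 d i.-1) i.

Definition DeltaEG (k : nat) (d : seq nat) : int :=
  ((k * k.-1)%:Z
   + (\sum_(k <= i < size d) minn k (nth 0 d i))%:Z
   - (\sum_(0 <= i < k) nth 0 d i)%:Z)%R.

From mathcomp Require Import all_boot all_order all_algebra.
From mathcomp Require Import zify.

Set Implicit Arguments.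
Unset Strict Implicit.
Unset Printing Implicit Defensive.

(* For a nonincreasing sequence s of length n write
     Phi_j(s) = j(j-1) + (s_1 + ... + s_n) - 2 (s_1 + ... + s_j).
   At k = m(s) every later term satisfies s_i <= s_k < k, so the minima in
   Delta_k(s) are the terms themselves and Delta_{m(s)}(s) = Phi_{m(s)}(s).
   If the terms of d are at most n-1, prefix sums of the complement are
   complementary suffix sums of d, which gives Phi_l(dbar) = Phi_{n-l}(d).
   Next, 0-indexed, m(d) counts the positions j with j <= d_j (a prefix)
   and m(dbar) counts the positions j with d_j <= j (a suffix); the two sets
   cover all positions and can only share a position with d_j = j.  Hence
   n - m(dbar) = m(d), or n - m(dbar) = m(d) - 1 with d_{m(d)-1} = m(d) - 1;
   in the latter case Phi_{m(d)-1}(d) = Phi_{m(d)}(d) since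
   Phi_{j+1} - Phi_j = 2 (j - d_j). *)

Definition nonincreasing (s : seq nat) : Prop :=
  forall p q, p <= q -> q < size s -> nth 0 s q <= nth 0 s p.

Lemma sorted_nonincreasing s : sorted geq s -> nonincreasing s.
Proof.
move=> s_sorted p q le_pq lt_q.
have geq_trans : transitive geq.
  by move=> x y z /= le_yx le_zy; apply: leq_trans le_zy le_yx.
apply: (sorted_leq_nth geq_trans (fun x => leqnn x) 0 s_sorted) => //;
  rewrite inE; lia.
Qed.

Lemma mEG_le_size s : mEG s <= size s.
Proof. by apply/bigmax_leqP_seq => i; rewrite mem_index_iota; lia. Qed.

Lemma mEG_ge s p : p < size s -> p <= nth 0 s p -> p < mEG s.
Proof.
move=> lt_p le_p; rewrite /mEG.
apply: (leq_bigmax_seq (F := id) (P := fun i => i.-1 <= nth 0 s i.-1)) => //.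
by rewrite mem_index_iota; lia.
Qed.

Lemma mEG_spec s p :
  nonincreasing s -> p < size s -> (p < mEG s) = (p <= nth 0 s p).
Proof.
move=> s_noninc lt_p; apply/idP/idP => [lt_pm | ]; last exact: mEG_ge.
rewrite leqNgt; apply/negP => lt_sp; move: lt_pm; apply/negP; rewrite -leqNgt.
apply/bigmax_leqP_seq => i; rewrite mem_index_iota => i_range le_i.
rewrite leqNgt; apply/negP => lt_pi.
have := s_noninc p i.-1; lia.
Qed.

Lemma nth_after_mEG s i :
  nonincreasing s -> mEG s <= i -> i < size s -> nth 0 s i < mEG s.
Proof.
move=> s_noninc le_mi lt_i.
have lt_m : mEG s < size s by lia.
have := mEG_spec s_noninc lt_m; rewrite ltnn => /esym/negbT; rewrite -ltnNge.
by have := s_noninc _ _ le_mi lt_i; lia.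
Qed.

Definition Phi (s : seq nat) (j : nat) : int :=
  ((j * j.-1)%:Z + (\sum_(0 <= i < size s) nth 0 s i)%:Z
   - 2 * (\sum_(0 <= i < j) nth 0 s i)%:Z)%R.

Lemma DeltaEG_Phi s : nonincreasing s -> DeltaEG (mEG s) s = Phi s (mEG s).
Proof.
move=> s_noninc; rewrite /DeltaEG /Phi.
have split_sum : \sum_(0 <= i < size s) nth 0 s i
    = \sum_(0 <= i < mEG s) nth 0 s i + \sum_(mEG s <= i < size s) nth 0 s i.
  by rewrite -big_cat_nat // mEG_le_size.
have suffix_min : \sum_(mEG s <= i < size s) minn (mEG s) (nth 0 s i)
                = \sum_(mEG s <= i < size s) nth 0 s i.
  apply: eq_big_nat => i /andP[le_mi lt_i]; apply/minn_idPr.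
  exact: ltnW (nth_after_mEG s_noninc le_mi lt_i).
rewrite suffix_min split_sum /= PoszD; lia.
Qed.

(* Phi_(j+1) - Phi_j = 2 (j - s_j); in particular Phi is flat where s_j = j. *)
Lemma Phi_flat s j : nth 0 s j = j -> Phi s j.+1 = Phi s j.
Proof.
move=> s_j; rewrite /Phi big_nat_recr //= s_j PoszD.
case: j {s_j} => [|j] /=; lia.
Qed.

Section Complement.

Variable d : seq nat.
Let n := size d.
Hypothesis d_noninc : nonincreasing d.
Hypothesis d_bounded : forall p, p < n -> nth 0 d p <= n.-1.

Lemma size_compl : size (compl_seq d) = n.
Proof. by rewrite size_map size_rev. Qed.

Lemma nth_compl p : p < n -> nth 0 (compl_seq d) p = n.-1 - nth 0 d (n.-1 - p).
Proof.
move=> lt_p; rewrite /compl_seq (nth_map 0) ?size_rev // nth_rev //.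
congr (_ - nth 0 d _); rewrite /n; lia.
Qed.

Lemma compl_noninc : nonincreasing (compl_seq d).
Proof.
move=> p q le_pq; rewrite size_compl => lt_q.
rewrite !nth_compl; try lia.
have := @d_noninc (n.-1 - q) (n.-1 - p); lia.
Qed.

Lemma prefix_sum_compl j : j <= n ->
  \sum_(0 <= i < j) nth 0 (compl_seq d) i + \sum_(0 <= i < n) nth 0 d i
  = j * n.-1 + \sum_(0 <= i < n - j) nth 0 d i.
Proof.
elim: j => [|j IH] le_j; first by rewrite big_geq // subn0.
have d_last : n - j = (n - j.+1).+1 by lia.
rewrite big_nat_recr //= nth_compl // -addnAC IH 1?ltnW // d_last big_nat_recr //=.
have -> : n.-1 - j = n - j.+1 by lia.
have := @d_bounded (n - j.+1); lia.
Qed.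

(* With the prefix sums eliminated, what remains is the polynomial identity
   l(l-1) + n(n-1) - 2l(n-1) = (n-l)(n-l-1). *)
Lemma Phi_compl l : l <= n -> Phi (compl_seq d) l = Phi d (n - l).
Proof.
move=> le_l; rewrite /Phi size_compl.
have total : \sum_(0 <= i < n) nth 0 (compl_seq d) i + \sum_(0 <= i < n) nth 0 d i
    = n * n.-1.
  by rewrite prefix_sum_compl // subnn (big_geq (leqnn 0)) addn0.
have prefix := prefix_sum_compl le_l; move: total prefix.
move: (\sum_(0 <= i < n) nth 0 (compl_seq d) i) (\sum_(0 <= i < n) nth 0 d i).
move: (\sum_(0 <= i < l) nth 0 (compl_seq d) i) (\sum_(0 <= i < n - l) nth 0 d i).
move=> Pc P Sc S total prefix.
have [m def_n] : exists m, n = l + m by exists (n - l); lia.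
rewrite def_n addKn in total prefix *.
case: l {le_l def_n} prefix total => [|l]; case: m => [|m] /=; nia.
Qed.

Lemma mEG_compl_spec j : j < n -> (n - mEG (compl_seq d) <= j) = (nth 0 d j <= j).
Proof.
move=> lt_j; have := mEG_le_size (compl_seq d); rewrite size_compl => le_l.
have lt_i : n.-1 - j < size (compl_seq d) by rewrite size_compl; lia.
have := mEG_spec compl_noninc lt_i; rewrite nth_compl; last lia.
have -> : n.-1 - (n.-1 - j) = j by lia.
have := d_bounded lt_j.
case: (ltnP _ (mEG _)); case: (leqP (nth 0 d j) j); lia.
Qed.

(* The prefix counted by m(d) and the suffix counted by m(dbar) cover all
   positions and overlap at most in one position j with d_j = j. *)
Lemma mEG_compl_cases :
  n - mEG (compl_seq d) = mEG d
  \/ n - mEG (compl_seq d) = (mEG d).-1 /\ nth 0 d (mEG d).-1 = (mEG d).-1.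
Proof.
have le_k := mEG_le_size d; have le_l := mEG_le_size (compl_seq d).
rewrite size_compl in le_l.
set k := mEG d in le_k *; set l := mEG (compl_seq d) in le_l *.
have prefix j : j < n -> (j < k) = (j <= nth 0 d j) := mEG_spec d_noninc.
have suffix j : j < n -> (n - l <= j) = (nth 0 d j <= j) := @mEG_compl_spec j.
have le_lk : n - l <= k.
  rewrite leqNgt; apply/negP => lt_k.
  have := prefix k; have := suffix k; rewrite ltnn; lia.
have [eq_lk | lt_lk] := eqVneq (n - l) k; [by left | right].
have k_pos : 0 < k by lia.
have fixed : nth 0 d k.-1 = k.-1.
  have := prefix k.-1; have := suffix k.-1; lia.
split=> //; apply/eqP; rewrite eqn_leq -ltnS prednK // ltn_neqAle lt_lk le_lk /=.
rewrite leqNgt; apply/negP => lt_l2.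
have := prefix k.-2; have := suffix k.-2; have := @d_noninc k.-2 k.-1; lia.
Qed.

End Complement.

Lemma degree_sequence_bounded d :
  is_degree_sequence d -> forall p, p < size d -> nth 0 d p <= (size d).-1.
Proof.
move=> [_ [e [_ [e_irr deg]]]] p lt_p.
rewrite -(deg (Ordinal lt_p)) -[X in _ <= X.-1](card_ord (size d)).
rewrite -(cardsC1 (Ordinal lt_p)); apply/subset_leq_card/subsetP => j.
by rewrite !inE; apply: contraTneq => ->; rewrite e_irr.
Qed.

Theorem corollary7 (d : seq nat) :
  is_degree_sequence d ->
  DeltaEG (mEG (compl_seq d)) (compl_seq d) = DeltaEG (mEG d) d.
Proof.
move=> deg_d; have d_bounded := degree_sequence_bounded deg_d.
have d_noninc : nonincreasing d by apply: sorted_nonincreasing; case: deg_d.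
rewrite !DeltaEG_Phi //; last exact: compl_noninc.
rewrite Phi_compl //; last by rewrite -(size_compl d) mEG_le_size.
have [-> //|[-> fixed]] := mEG_compl_cases d_noninc d_bounded.
have [-> // | k_pos] := posnP (mEG d).
by rewrite -Phi_flat ?prednK.
Qed.
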